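(* Let $X,Y$ be Banach lattices and let $S\colon X\to Y$ be sublinear and continuous. Then $S$ is Lipschitz: there exists $L>0$ with $\|Sx-Sy\|\le L\|x-y\|$ for all $x,y\in X$.
   Context: An operator $S\colon X\to Y$ is sublinear if it is convex, i.e. $S(\lambda x+(1-\lambda)y)\le\lambda Sx+(1-\lambda)Sy$ for all $x,y$, $\lambda\in[0,1]$, and positive homogeneous, i.e. $S(\lambda x)=\lambda Sx$ for all $\lambda>0$, $x\in X$. *)

From HB Require Import structures.
From mathcomp Require Import all_boot all_order all_algebra.
From mathcomp Require Import all_classical all_reals all_analysis.
Set Implicit Arguments. Unset Strict Implicit. Unset Printing Implicit Defensive.
Import Order.TTheory GRing.Theory Num.Theory.
Import numFieldNormedType.Exports.
Local Open Scope ring_scope.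

(* A (real) Banach lattice structure on a Banach space X:
   a partial order [le] compatible with the vector space operations,
   a binary supremum [join] (so that (X, le) is a lattice, i.e. a Riesz space;
   infima then exist as  x /\ y = -((-x) \/ (-y))),
   and the lattice norm axiom  |x| <= |y| -> ||x|| <= ||y||  with |x| = x \/ -x. *)
Record banach_lattice (R : realType) (X : completeNormedModType R) := BanachLattice {
  bl_le : X -> X -> Prop;
  bl_join : X -> X -> X;
  bl_refl : forall x, bl_le x x;
  bl_antisym : forall x y, bl_le x y -> bl_le y x -> x = y;
  bl_trans : forall x y z, bl_le x y -> bl_le y z -> bl_le x z;
  bl_add : forall x y z, bl_le x y -> bl_le (x + z) (y + z);
  bl_scale : forall (a : R) x y, 0 <= a -> bl_le x y -> bl_le (a *: x) (a *: y);
  bl_join_ubl : forall x y, bl_le x (bl_join x y);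
  bl_join_ubr : forall x y, bl_le y (bl_join x y);
  bl_join_lub : forall x y z, bl_le x z -> bl_le y z -> bl_le (bl_join x y) z;
  bl_norm_mono : forall x y,
    bl_le (bl_join x (- x)) (bl_join y (- y)) -> `|x| <= `|y|
}.

Definition sublinear (R : realType) (X Y : completeNormedModType R)
    (LY : banach_lattice Y) (S : X -> Y) : Prop :=
  (forall (x y : X) (l : R), 0 <= l <= 1 ->
     bl_le LY (S (l *: x + (1 - l) *: y)) (l *: S x + (1 - l) *: S y)) /\
  (forall (l : R) (x : X), 0 < l -> S (l *: x) = l *: S x).

From HB Require Import structures.
From mathcomp Require Import all_boot all_order all_algebra.
From mathcomp Require Import all_classical all_reals all_analysis.
From mathcomp Require Import ring lra.
Set Implicit Arguments. Unset Strict Implicit. Unset Printing Implicit Defensive.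
Import Order.TTheory GRing.Theory Num.Theory.
Import numFieldNormedType.Exports.
Local Open Scope ring_scope.

(* Subadditivity gives [S x - S y <= S (x - y)] and [S y - S x <= S (y - x)],
   so [S x - S y] is squeezed between two vectors whose norms are at most
   [C * |x - y|], where [C] bounds the positively homogeneous, continuous [S]
   on the unit ball.  In a Banach lattice such a two-sided order bound
   [z <= a], [- z <= b] yields [|z| <= |a| + |b|], whence [L = 2 C]. *)

Section BanachLatticeTheory.
Variables (R : realType) (Y : completeNormedModType R) (LY : banach_lattice Y).
Local Notation le := (bl_le LY).
Local Notation absL x := (bl_join LY x%R (- x)).

Lemma bl_leD {a b c d : Y} : le a b -> le c d -> le (a + c) (b + d).
Proof.
move=> le_ab le_cd; apply: (bl_trans (y := b + c)); first exact: bl_add.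
by rewrite (addrC b c) (addrC b d); apply: bl_add.
Qed.

Lemma bl_leN {a b : Y} : le a b -> le (- b) (- a).
Proof.
move=> le_ab; have := bl_add (- a - b) le_ab.
by rewrite addrA subrr add0r addrC -addrA addNr addr0.
Qed.

Lemma bl_abs_ge0 (x : Y) : le 0 (absL x).
Proof.
have := bl_leD (bl_join_ubl LY x (- x)) (bl_join_ubr LY x (- x)).
rewrite subrr => /(bl_scale (a := 2^-1)); rewrite scaler0 scalerDr -scalerDl.
have -> : (2^-1 + 2^-1 : R) = 1 by field.
by rewrite scale1r; apply; rewrite invr_ge0 ler0n.
Qed.

Lemma bl_abs_id (w : Y) : le 0 w -> absL w = w.
Proof.
move=> w_ge0; apply: bl_antisym; last exact: bl_join_ubl.
apply: bl_join_lub; first exact: bl_refl.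
by apply: (bl_trans _ w_ge0); rewrite -oppr0; apply: bl_leN.
Qed.

Lemma bl_norm_abs (x : Y) : `|absL x| <= `|x|.
Proof.
apply: (bl_norm_mono (b := LY)).
by rewrite bl_abs_id; [apply: bl_refl | apply: bl_abs_ge0].
Qed.

Lemma bl_norm_le_normD (z a b : Y) : le z a -> le (- z) b -> `|z| <= `|a| + `|b|.
Proof.
move=> le_za le_Nzb.
have abs_le_sum c d : le c (absL c + absL d).
  by rewrite -{1}[c]addr0; apply: bl_leD (bl_join_ubl LY c (- c)) (bl_abs_ge0 d).
have sum_ge0 : le 0 (absL a + absL b).
  by rewrite -(addr0 0); apply: bl_leD; apply: bl_abs_ge0.
have : le (absL z) (absL (absL a + absL b)).
  rewrite (bl_abs_id sum_ge0); apply: bl_join_lub.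
  - exact: bl_trans le_za (abs_le_sum a b).
  - by rewrite addrC; apply: bl_trans le_Nzb (abs_le_sum b a).
move=> /bl_norm_mono le_norm; apply: (le_trans le_norm).
by apply: le_trans (ler_normD _ _) _; apply: lerD; apply: bl_norm_abs.
Qed.

End BanachLatticeTheory.

Section PositivelyHomogeneous.
Variables (R : realType) (X Y : normedModType R) (S : X -> Y).
Hypothesis S_homo : forall (l : R) (x : X), 0 < l -> S (l *: x) = l *: S x.

Lemma pos_homogeneous0 : S 0 = 0.
Proof.
have := @S_homo 2%:R 0 (ltr0n _ 2); rewrite scaler0 scaler_nat mulr2n => S0E.
by rewrite -(subrr (S 0)) {2}S0E addrK.
Qed.

Lemma pos_homogeneous_bounded : {for 0, continuous S} ->
  exists2 C : R, 0 < C & forall u, `|S u| <= C * `|u|.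
Proof.
move=> /cvgrPdist_le /(_ 1 ltr01) /nbhs_norm0P [d /= d_gt0 near0].
exists (2 / d); first by rewrite divr_gt0.
move=> u; have [->|u_neq0] := eqVneq u 0; first by rewrite pos_homogeneous0 !normr0 mulr0.
have u_gt0 : 0 < `|u| by rewrite normr_gt0.
(* rescale [u] to norm [d / 2], where [S] is bounded by [1] *)
set c := d / (2 * `|u|); have c_gt0 : 0 < c by rewrite divr_gt0 // mulr_gt0.
have : `|c *: u| < d.
  rewrite normrZ gtr0_norm //.
  have -> : c * `|u| = d / 2 by rewrite /c; field; rewrite gt_eqF.
  lra.
move=> /near0; rewrite pos_homogeneous0 sub0r normrN S_homo // normrZ gtr0_norm //.
rewrite -ler_pdivlMl // mulr1 => /le_trans; apply.
by rewrite /c invf_div mulrAC.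
Qed.

End PositivelyHomogeneous.

Section Sublinear.
Variables (R : realType) (X Y : completeNormedModType R) (LY : banach_lattice Y).
Variable S : X -> Y.
Hypothesis S_sublinear : sublinear LY S.

Lemma sublinear_subadd (x y : X) : bl_le LY (S (x + y)) (S x + S y).
Proof.
case: S_sublinear => S_convex S_homo.
have := S_convex (2%:R *: x) (2%:R *: y) (2^-1) _.
rewrite !S_homo ?ltr0n // !scalerA.
have -> : (1 - 2^-1 : R) = 2^-1 by field.
rewrite mulVf ?pnatr_eq0 // !scale1r; apply.
by rewrite invr_ge0 ler0n /= invf_le1 ?ltr0n // ler1n.
Qed.

Lemma sublinear_subB (x y : X) : bl_le LY (S x - S y) (S (x - y)).
Proof.
have := bl_add (- S y) (sublinear_subadd y (x - y)).
by rewrite [y + _]addrC subrK [S y + _]addrC addrK.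
Qed.

End Sublinear.

Theorem lemmaA7 (R : realType) (X Y : completeNormedModType R)
    (LX : banach_lattice X) (LY : banach_lattice Y) (S : X -> Y) :
  sublinear LY S -> continuous S ->
  exists L : R, 0 < L /\ forall x y : X, `|S x - S y| <= L * `|x - y|.
Proof.
move=> S_sublinear S_cont.
have [C C_gt0 S_bounded] := pos_homogeneous_bounded S_sublinear.2 (S_cont 0).
exists (2 * C); split; first by rewrite mulr_gt0.
move=> x y.
have le_xy := sublinear_subB S_sublinear x y.
have le_yx : bl_le LY (- (S x - S y)) (S (y - x)).
  by rewrite opprB; apply: sublinear_subB.
apply: le_trans (bl_norm_le_normD le_xy le_yx) _.
apply: le_trans (lerD (S_bounded _) (S_bounded _)) _.
by rewrite distrC -mulrDl -mulr2n mulr_natl.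
Qed.
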